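(* Let $(u^k)$ be the iteration sequence defined by Algorithm 2 below, and suppose that at step $k$ one has $\delta^k>0$. Then $\lambda(u^{k+1})>\lambda(u^k)$.
   Context: $T,G:\mathbb{R}^n\to\mathbb{R}^n$ are continuously differentiable; $S\subset\mathbb{R}^n$ is open with $\langle G(u),\psi\rangle>0$ for all $u\in S$ and all nonzero $\psi$ with nonnegative entries. For $u\in S$: $f_i(u)=T_i(u)/G_i(u)$, $\lambda(u)=\min_i f_i(u)$, $N_\varepsilon(u)=\{i: f_i(u)-\lambda(u)<\varepsilon\}$. For $M=\{i_1<\dots<i_m\}$, $\mathcal{A}_M(u)$ is the $n\times m$ matrix with columns $\nabla f_{i_1}(u),\dots,\nabla f_{i_m}(u)$ and $\Gamma_M(u)=\mathcal{A}_M(u)^T\mathcal{A}_M(u)$. Algorithm 2 (parameters $\varepsilon,\delta>0$, start $u_0\in S$): for $k=0,1,2,\dots$: compute $\lambda(u^k)$ and $N_\varepsilon(u^k)=\{i_1<\dots<i_N\}$; solve the linear system $\Gamma_{N_\varepsilon(u^k)}(u^k)\alpha^k=\delta^k(1,\dots,1)^T$, $\sum_{j=1}^N\alpha^k_j=1$ for $(\alpha^k,\delta^k)\in\mathbb{R}^N\times\mathbb{R}$; if $\delta^k<\delta$ and $N=n$, stop; otherwise set $Y^k=\sum_{j=1}^N\alpha^k_j\nabla f_{i_j}(u^k)$, $y^k=Y^k/\|Y^k\|$, take the step length $\tau^k\ge0$ to be a maximizer (computed by golden section search) of $\kappa(\tau)=\lambda(u^k+\tau y^k)$ over $\tau\ge0$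 with $u^k+\tau y^k\in S$, and set $u^{k+1}=u^k+\tau^ky^k$. *)

From HB Require Import structures.
From mathcomp Require Import all_boot all_order all_algebra.
From mathcomp Require Import all_classical all_reals all_analysis.
Set Implicit Arguments. Unset Strict Implicit. Unset Printing Implicit Defensive.
Import Order.TTheory GRing.Theory Num.Theory.
Import numFieldNormedType.Exports.
Local Open Scope classical_set_scope.
Local Open Scope ring_scope.

Section Alg2.
Variables (R : realType) (n : nat).
Notation vec := 'rV[R]_n.

Definition dotv (a b : vec) : R := \sum_(i < n) a 0 i * b 0 i.
Definition enorm (a : vec) : R := Num.sqrt (dotv a a).

Definition fi (T G : vec -> vec) (i : 'I_n) (u : vec) : R := T u 0 i / G u 0 i.

Definition grad (g : vec -> R) (u : vec) : vec :=
  \row_(j < n) ('D_(delta_mx 0 j) g u).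

(* lambda(u) = min_i f_i(u)  (the default value only matters when n = 0) *)
Definition lam (T G : vec -> vec) (u : vec) : R :=
  \big[Num.min/head 0 [seq fi T G i u | i <- enum 'I_n]]_(i < n) fi T G i u.

Definition Neps (T G : vec -> vec) (eps : R) (u : vec) : {set 'I_n} :=
  [set i | fi T G i u - lam T G u < eps].

(* A_M(u): n x |M| matrix whose j-th column is grad f_{i_j}(u), i_1 < ... < i_N *)
Definition Amat (T G : vec -> vec) (M : {set 'I_n}) (u : vec) : 'M[R]_(n, #|M|) :=
  \matrix_(r < n, j < #|M|) grad (fi T G (enum_val j)) u 0 r.

Definition Gam (T G : vec -> vec) (M : {set 'I_n}) (u : vec) : 'M[R]_(#|M|) :=
  (Amat T G M u)^T *m Amat T G M u.

(* One (non-stopping) iteration of Algorithm 2 from u to u', with the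
   computed solution (alpha, dk) of the linear system and step length tau. *)
Definition alg2_step (T G : vec -> vec) (S : set vec) (eps delta : R)
    (u : vec) (alpha : 'cV[R]_(#|Neps T G eps u|)) (dk tau : R) (u' : vec) : Prop :=
  let M := Neps T G eps u in
  let Y : vec := (Amat T G M u *m alpha)^T in
  let y : vec := (enorm Y)^-1 *: Y in
  [/\ Gam T G M u *m alpha = dk *: const_mx 1,
      \sum_(j < #|M|) alpha j 0 = 1,
      ~ (dk < delta /\ #|M| = n),
      (0 <= tau /\ S (u + tau *: y) /\
      (forall t : R, 0 <= t -> S (u + t *: y) ->
         lam T G (u + t *: y) <= lam T G (u + tau *: y)))
    & u' = u + tau *: y].

Definition C1 (F : vec -> vec) : Prop :=
  (forall x, differentiable F x) /\ (forall h : vec, continuous (fun x => 'd F x h)).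

End Alg2.

Arguments alg2_step {R n} T G S eps delta u alpha dk tau u'.
Arguments Neps {R n} T G eps u.
Arguments lam {R n} T G u.
Arguments Amat {R n} T G M u.
Arguments Gam {R n} T G M u.
Arguments fi {R n} T G i u.

From HB Require Import structures.
From mathcomp Require Import all_boot all_order all_algebra.
From mathcomp Require Import all_classical all_reals all_analysis.
Set Implicit Arguments. Unset Strict Implicit. Unset Printing Implicit Defensive.
Import Order.TTheory GRing.Theory Num.Theory.
Import numFieldNormedType.Exports.
Local Open Scope classical_set_scope.
Local Open Scope ring_scope.

(* The direction y computed by Algorithm 2 satisfies <y, grad f_i(u)> = delta^k / |Y| > 0
   for every index i of N_eps(u): the Gram system says exactly that Y has the same inner
   product delta^k with every column of A_M(u).  Hence every nearly active f_i strictly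
   increases along y for small steps, the inactive ones stay above lambda(u) by
   continuity, so lambda increases for some small step inside the open set S, and a
   maximizing step length does at least as well. *)

Section Alg2Ascent.
Variables (R : realType) (n : nat).
Notation vec := 'rV[R]_n.

Lemma lam_le (T G : vec -> vec) u i : lam T G u <= fi T G i u.
Proof. exact: bigmin_le. Qed.

Lemma lt_lam (T G : vec -> vec) u c :
  (0 < n)%N -> (forall i, c < fi T G i u) -> c < lam T G u.
Proof.
move=> n_gt0 c_lt; apply: lt_bigmin => [|i _]; last exact: c_lt.
have i0 : 'I_n := Ordinal n_gt0.
by rewrite -nth0 (nth_map i0) ?size_enum_ord.
Qed.

Lemma dotv_delta (a : vec) i : dotv a (delta_mx 0 i) = a 0 i.
Proof.
rewrite /dotv (bigD1 i) //= big1 ?addr0 => [|j ji]; first by rewrite mxE !eqxx mulr1.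
by rewrite mxE (negbTE ji) andbF mulr0.
Qed.

Lemma dotvZl c (a b : vec) : dotv (c *: a) b = c * dotv a b.
Proof. by rewrite /dotv mulr_sumr; apply: eq_bigr => j _; rewrite mxE mulrA. Qed.

Lemma dotv0l (b : vec) : dotv 0 b = 0.
Proof. by rewrite /dotv big1 // => j _; rewrite mxE mul0r. Qed.

Lemma dotv_gt0 (a : vec) : a != 0 -> 0 < dotv a a.
Proof.
move=> a_neq0; rewrite lt_def sumr_ge0 ?andbT => [|j _]; last by rewrite -expr2 sqr_ge0.
apply: contra a_neq0; rewrite psumr_eq0 => [/allP a0|j _]; last by rewrite -expr2 sqr_ge0.
apply/eqP/rowP => j; have := a0 j (mem_index_enum j).
by rewrite mulf_eq0 orbb mxE => /eqP.
Qed.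

Lemma coord_gt0_of_dotv_pos (g : vec) i :
  (forall psi : vec, (forall j, 0 <= psi 0 j) -> psi != 0 -> 0 < dotv g psi) ->
  0 < g 0 i.
Proof.
move=> g_pos; rewrite -dotv_delta; apply: g_pos => [j|].
  by rewrite mxE; case: (_ && _).
apply/eqP => /matrixP /(_ 0 i); rewrite !mxE !eqxx /= => /eqP.
by rewrite oner_eq0.
Qed.

Lemma derive_dotv_grad (f : vec -> R) u y :
  differentiable f u -> 'D_y f u = dotv y (grad f u).
Proof.
move=> df; rewrite deriveE // {1}(row_sum_delta y) linear_sum /dotv.
by apply: eq_bigr => j _; rewrite linearZ /= mxE -deriveE.
Qed.

Lemma differentiable_fi (T G : vec -> vec) u i :
  differentiable T u -> differentiable G u -> G u 0 i != 0 ->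
  differentiable (fi T G i) u.
Proof.
move=> dT dG Gi_neq0.
have -> : fi T G i = ((fun N : vec => N 0 i) \o T) *
                     (fun x => (((fun N : vec => N 0 i) \o G) x)^-1) by [].
apply: differentiableM; first by apply: differentiable_comp => //; exact: differentiable_coord.
by apply: differentiableV => //; apply: differentiable_comp => //; exact: differentiable_coord.
Qed.

Lemma Gam_system_dotv (T G : vec -> vec) (M : {set 'I_n}) u
    (alpha : 'cV[R]_#|M|) (d : R) (j : 'I_#|M|) :
  Gam T G M u *m alpha = d *: const_mx 1 ->
  dotv (Amat T G M u *m alpha)^T (grad (fi T G (enum_val j)) u) = d.
Proof.
move=> /(congr1 (fun B : 'cV[R]_#|M| => B j 0)).
rewrite /Gam -mulmxA !mxE mulr1 => <-.
by apply: eq_bigr => r _; rewrite !mxE mulrC.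
Qed.

Definition alg2_dir (T G : vec -> vec) eps u (alpha : 'cV[R]_#|Neps T G eps u|) : vec :=
  let Y : vec := (Amat T G (Neps T G eps u) u *m alpha)^T in (enorm Y)^-1 *: Y.

Lemma derive_alg2_dir_gt0 (T G : vec -> vec) eps u
    (alpha : 'cV[R]_#|Neps T G eps u|) dk i :
  Gam T G (Neps T G eps u) u *m alpha = dk *: const_mx 1 -> 0 < dk ->
  differentiable (fi T G i) u -> i \in Neps T G eps u ->
  0 < 'D_(alg2_dir alpha) (fi T G i) u.
Proof.
move=> gram dk_gt0 dfi iM.
have := Gam_system_dotv (enum_rank_in iM i) gram; rewrite enum_rankK_in // => dotY.
set Y := (_ *m alpha)^T in dotY.
have Y_neq0 : Y != 0 by apply: contraTneq dk_gt0 => Y0; rewrite -dotY Y0 dotv0l ltxx.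
rewrite derive_dotv_grad // dotvZl dotY mulr_gt0 // invr_gt0 sqrtr_gt0.
exact: dotv_gt0.
Qed.

Lemma cvg_line (y u : vec) : (fun h : R => h *: y + u) @ nbhs (0 : R) --> u.
Proof.
rewrite -[X in _ --> X]add0r -(scale0r y).
exact: cvgD (cvgZ cvg_id (cvg_cst _)) (cvg_cst _).
Qed.

Lemma lam_lt_fi_near (T G : vec -> vec) eps u y i : 0 < eps ->
  differentiable (fi T G i) u ->
  (i \in Neps T G eps u -> 0 < 'D_y (fi T G i) u) ->
  \forall h \near 0^'+, lam T G u < fi T G i (h *: y + u).
Proof.
move=> eps_gt0 dfi D_gt0; case: (boolP (i \in Neps T G eps u)) => iM.
  have Dy : (fun h : R => h^-1 *: (fi T G i (h *: y + u) - fi T G i u)) @ 0^' -->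
            'D_y (fi T G i) u := diff_derivable dfi.
  have := cvgr_gt (FF := dnbhs_filter _) _ Dy _ (D_gt0 iM).
  rewrite !near_withinE; apply: filterS => h D_h h_gt0.
  have := D_h (lt0r_neq0 h_gt0); rewrite pmulr_rgt0 ?invr_gt0 // subr_gt0.
  exact/le_lt_trans/lam_le.
have lam_lt : lam T G u < fi T G i u.
  by move: iM; rewrite inE -leNgt -subr_gt0 => /(lt_le_trans eps_gt0).
have fi_cvg := cvg_comp _ _ (@cvg_line y u) (differentiable_continuous dfi).
rewrite near_withinE; apply: filterS (cvgr_gt (FF := nbhs_filter _) _ fi_cvg _ lam_lt).
by move=> h + _.
Qed.

Lemma lam_ascent (T G : vec -> vec) (S : set vec) eps u y :
  (0 < n)%N -> open S -> S u -> 0 < eps ->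
  (forall i, differentiable (fi T G i) u) ->
  (forall i, i \in Neps T G eps u -> 0 < 'D_y (fi T G i) u) ->
  exists2 t, 0 < t & S (u + t *: y) /\ lam T G u < lam T G (u + t *: y).
Proof.
move=> n_gt0 oS Su eps_gt0 dfi D_gt0.
have S_near : \forall h \near (0 : R), S (h *: y + u).
  by apply: (@cvg_line y u); apply: open_nbhs_nbhs.
near (0 : R)^'+ => t.
exists t; first by near: t; exact: nbhs_right_gt.
rewrite addrC; split.
  by near: t; rewrite near_withinE; apply: filterS S_near.
apply: lt_lam => //; near: t; apply: filter_forall => i.
exact: lam_lt_fi_near eps_gt0 (dfi i) (@D_gt0 i).
Unshelve. all: by end_near.
Qed.

Lemma alg2_step_in_S (T G : vec -> vec) (S : set vec) eps delta u alpha dk tau u' :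
  alg2_step T G S eps delta u alpha dk tau u' -> S u'.
Proof. by case=> _ _ _ [_ []] + _ ->. Qed.

Lemma alg2_iterate_in_S (T G : vec -> vec) (S : set vec) eps delta (useq : nat -> vec) k :
  S (useq 0%N) ->
  (forall m, (m < k)%N -> exists (a : 'cV[R]_(#|Neps T G eps (useq m)|)) (d t : R),
     alg2_step T G S eps delta (useq m) a d t (useq m.+1)) ->
  S (useq k).
Proof.
case: k => [//|m] _ steps.
by have [a [d [t /alg2_step_in_S]]] := steps m (ltnSn m).
Qed.

End Alg2Ascent.

Theorem proposition3 (R : realType) (n : nat) (T G : 'rV[R]_n -> 'rV[R]_n)
  (S : set 'rV[R]_n) (eps delta : R) (useq : nat -> 'rV[R]_n) (k : nat)
  (alpha : 'cV[R]_(#|Neps T G eps (useq k)|)) (dk tau : R) :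
  (0 < n)%N ->
  C1 T -> C1 G ->
  open S ->
  (forall u, S u -> forall psi : 'rV[R]_n,
      (forall i, 0 <= psi 0 i) -> psi != 0 -> 0 < dotv (G u) psi) ->
  0 < eps -> 0 < delta ->
  S (useq 0%N) ->
  (forall m, (m < k)%N ->
     exists (a : 'cV[R]_(#|Neps T G eps (useq m)|)) (d t : R),
       alg2_step T G S eps delta (useq m) a d t (useq m.+1)) ->
  alg2_step T G S eps delta (useq k) alpha dk tau (useq k.+1) ->
  0 < dk ->
  lam T G (useq k) < lam T G (useq k.+1).
Proof.
move=> n_gt0 [dT _] [dG _] oS G_pos eps_gt0 _ S0 steps [gram _ _ [_ [_ tau_max]] ->] dk_gt0.
have Su := alg2_iterate_in_S S0 steps.
have dfi i : differentiable (fi T G i) (useq k).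
  exact: differentiable_fi (dT _) (dG _) (lt0r_neq0 (coord_gt0_of_dotv_pos i (G_pos _ Su))).
have [t t_gt0 [St lam_lt]] := lam_ascent (y := alg2_dir alpha) n_gt0 oS Su eps_gt0 dfi
  (fun i => derive_alg2_dir_gt0 gram dk_gt0 (dfi i)).
exact: lt_le_trans lam_lt (tau_max t (ltW t_gt0) St).
Qed.
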